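(* Let $(a_{i,j})_{i,j\in\mathbb{N}}$ and $(b_{i,j})_{i,j\in\mathbb{N}}$ be arbitrary real numbers, and let $(T(n,k))_{n\ge 0,\,k\in\mathbb{Z}}$ be defined by $T(0,0)=1$, $T(n,k)=0$ whenever $k<0$ or $k>n$, and \[ T(n,k)=a_{n,k}\,T(n-1,k)+b_{n,k}\,T(n-1,k-1)\qquad (n\ge 1). \] Then for all integers $0\le k\le n$, \[ T(n,k)=\sum_{\sigma\in\mathcal{C}^\uparrow(k,n)}\ \prod_{i=1}^{n-k} a_{\tilde\sigma_i,\ \tilde\sigma_i-i}\ \prod_{i=1}^{k} b_{\sigma(i),\ i}. \]
   Context: $[n]=\{1,\dots,n\}$. $\mathcal{C}^\uparrow(k,n)$ is the set of strictly increasing functions $\sigma:[k]\to[n]$. For $\sigma\in\mathcal{C}^\uparrow(k,n)$, $(\tilde\sigma_1<\tilde\sigma_2<\cdots<\tilde\sigma_{n-k})$ denotes the increasing list of the elements of $[n]\setminus\sigma([k])$. Empty products equal $1$. *)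

From HB Require Import structures.
From mathcomp Require Import all_boot all_order all_algebra.
From mathcomp Require Export reals.
Set Implicit Arguments. Unset Strict Implicit. Unset Printing Implicit Defensive.
Import Order.TTheory GRing.Theory Num.Theory.

(* C^up(k,n): strictly increasing functions [k] -> [n].  We index [k] by 'I_k
   (i : 'I_k stands for i+1 in [k]) and [n] by 'I_n (j : 'I_n stands for j+1). *)
Definition incr_funs (k n : nat) : {set {ffun 'I_k -> 'I_n}} :=
  [set s : {ffun 'I_k -> 'I_n} | [forall i : 'I_k, forall j : 'I_k, (i < j)%N ==> (s i < s j)%N]].

Definition sig1 (k n : nat) (s : {ffun 'I_k -> 'I_n}) (i : 'I_k) : nat := (s i).+1.

(* increasing list (tilde sigma_1 < ... < tilde sigma_{n-k}) of [n] \ sigma([k]) *)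
Definition compl_seq (k n : nat) (s : {ffun 'I_k -> 'I_n}) : seq nat :=
  [seq j <- iota 1 n | j \notin [seq sig1 s i | i : 'I_k]].

From mathcomp Require Import all_boot all_order all_algebra.
From mathcomp Require Import reals.
From mathcomp Require Import zify.
Set Implicit Arguments. Unset Strict Implicit. Unset Printing Implicit Defensive.
Import Order.TTheory GRing.Theory Num.Theory.

(* A strictly increasing sigma : [k] -> [n] is the same as its list of values
   sigma(1) < ... < sigma(k).  Such lists are enumerated recursively: a list of
   length k in [1, n+1] either avoids n+1, or is a list of length k-1 in [1, n]
   followed by n+1.  This is exactly the recurrence for T: removing n+1 from the
   complement multiplies the weight by a_{n+1,k} (n+1 is the last of the n+1-k
   complement points), and removing it from sigma multiplies the weight by
   b_{n+1,k} (n+1 = sigma(k)). *)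

Definition incr_seq_in n (L : seq nat) := sorted ltn L && all (fun x => 0 < x <= n) L.

Fixpoint incr_seqs n k {struct n} : seq (seq nat) :=
  match k, n with
  | 0, _ => [:: [::]]
  | _.+1, 0 => [::]
  | k'.+1, n'.+1 => incr_seqs n' k ++ map (rcons^~ n) (incr_seqs n' k')
  end.

Definition complement n (L : seq nat) := [seq j <- iota 1 n | j \notin L].

Lemma incr_seq_in_rcons n L x :
  incr_seq_in n (rcons L x) = [&& incr_seq_in x.-1 L, 0 < x & x <= n].
Proof.
rewrite /incr_seq_in !(sorted_pairwise ltn_trans) pairwise_rcons all_rcons /=.
have [/andP[x_gt0 x_le_n] | _] := boolP (0 < x <= n); last by rewrite andFb !andbF.
rewrite andTb andbT andbAC andbC -all_predI; congr (_ && _).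
by apply: eq_all => y /=; lia.
Qed.

Lemma incr_seqs0 n : incr_seqs n 0 = [:: [::]].
Proof. by case: n. Qed.

Lemma incr_seqs_nil n k : n < k -> incr_seqs n k = [::].
Proof. by elim: n k => [|n IH] [|k] //= lt_nk; rewrite IH ?(ltnW lt_nk) // IH. Qed.

Lemma mem_incr_seqs n k L : (L \in incr_seqs n k) = incr_seq_in n L && (size L == k).
Proof.
elim: n k L => [|n IH] [|k] L.
1,3: by case: L => [|x L]; rewrite inE /= ?andbF.
  by case: L => [|[|x] L]; rewrite /incr_seq_in /= ?andbF.
rewrite /= mem_cat IH; case/lastP: L => [|L x].
  by rewrite !andbF; apply/mapP => -[[|? ?]].
rewrite !incr_seq_in_rcons size_rcons eqSS.
have [-> | x_neq] := eqVneq x n.+1.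
  by rewrite (mem_map (rcons_injl _)) IH /= ltnn ltnSn !andbF andbT.
have -> : (rcons L x \in map (rcons^~ n.+1) (incr_seqs n k)) = false.
  by apply/mapP => -[L' _ /rcons_inj[_ x_eq]]; rewrite x_eq eqxx in x_neq.
by rewrite orbF [x <= n.+1]leq_eqVlt (negbTE x_neq).
Qed.

Lemma incr_seqs_uniq n k : uniq (incr_seqs n k).
Proof.
elim: n k => [|n IH] [|k] //=.
rewrite cat_uniq !IH map_inj_uniq ?IH ?andbT; last exact: rcons_injl.
apply/hasPn => _ /mapP[L _ ->].
by rewrite mem_incr_seqs incr_seq_in_rcons ltnn !andbF.
Qed.

Lemma incr_seq_in_filter n L : incr_seq_in n L -> [seq j <- iota 1 n | j \in L] = L.
Proof.
case/andP => L_sorted L_in; apply: (irr_sorted_eq ltn_trans ltnn) => //.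
  exact/sorted_filter/iota_ltn_sorted/ltn_trans.
move=> j; rewrite mem_filter mem_iota.
apply/andP/idP => [[]//|jL]; split=> //; move/allP: L_in => /(_ j jL); lia.
Qed.

Lemma size_incr_seq_in n L : incr_seq_in n L -> size L <= n.
Proof.
move=> /incr_seq_in_filter <-; rewrite size_filter.
by apply: leq_trans (count_size _ _) _; rewrite size_iota.
Qed.

Lemma size_complement n L : incr_seq_in n L -> size (complement n L) = n - size L.
Proof.
move=> L_in; rewrite -{2}(incr_seq_in_filter L_in) !size_filter.
by rewrite -(addKn (count (mem L) (iota 1 n)) (count (predC (mem L)) _))
  count_predC size_iota.
Qed.

Lemma complementS n L : n.+1 \notin L -> complement n.+1 L = rcons (complement n L) n.+1.
Proof.
by move=> nL; rewrite /complement -[n.+1]addn1 iotaD filter_cat add1n addn1 /= nL cats1.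
Qed.

Lemma complement_rcons n L : complement n.+1 (rcons L n.+1) = complement n L.
Proof.
rewrite /complement -[n.+1]addn1 iotaD filter_cat add1n addn1 /= mem_rcons mem_head cats0.
apply: eq_in_filter => j; rewrite mem_iota add1n => /andP[_ lt_jn].
by rewrite mem_rcons in_cons ltn_eqF.
Qed.

Local Open Scope ring_scope.

Section Weight.

Variables (R : comPzSemiRingType) (a b : nat -> nat -> R).

Definition weight n (L : seq nat) : R :=
  (\prod_(i < n - size L)
      a (nth 0%N (complement n L) i) (nth 0%N (complement n L) i - i.+1)%N)
  * \prod_(i < size L) b (nth 0%N L i) i.+1.

Lemma weightS n L : incr_seq_in n L -> weight n.+1 L = a n.+1 (size L) * weight n L.
Proof.
move=> L_in; have le_Ln := size_incr_seq_in L_in.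
have nL : n.+1 \notin L.
  by apply/negP; case/andP: L_in => _ /allP/[apply]; rewrite ltnn andbF.
rewrite /weight complementS // subSn // big_ord_recr /=.
rewrite nth_rcons size_complement // ltnn eqxx subSS subKn //.
rewrite (eq_bigr (fun i : 'I_(n - size L) =>
    a (nth 0%N (complement n L) i) (nth 0%N (complement n L) i - i.+1)%N)).
  by rewrite mulrAC mulrC.
by move=> i _; rewrite nth_rcons size_complement // ltn_ord.
Qed.

Lemma weight_rcons n L :
  weight n.+1 (rcons L n.+1) = b n.+1 (size L).+1 * weight n L.
Proof.
rewrite /weight complement_rcons size_rcons subSS big_ord_recr /=.
rewrite nth_rcons ltnn eqxx.
rewrite (eq_bigr (fun i : 'I_(size L) => b (nth 0%N L i) i.+1)).
  by rewrite mulrA mulrC.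
by move=> i _; rewrite nth_rcons ltn_ord.
Qed.

Variable T : nat -> int -> R.
Hypothesis T00 : T 0%N 0%Z = 1.
Hypothesis T_out : forall (n : nat) (k : int), (k < 0)%R \/ (n%:Z < k)%R -> T n k = 0.
Hypothesis T_rec : forall (n k : nat), (1 <= n)%N -> (k <= n)%N ->
  T n k%:Z = a n k * T n.-1 k%:Z + b n k * T n.-1 (k%:Z - 1).

Lemma T_incr_seqs n k : (k <= n)%N -> T n k = \sum_(L <- incr_seqs n k) weight n L.
Proof.
elim: n k => [|n IH] [|k] le_kn //.
- by rewrite big_seq1 /weight !big_ord0 mulr1 T00.
- rewrite T_rec //= (T_out (n:=n) (k:=0 - 1)); last by left.
  by rewrite mulr0 addr0 IH // incr_seqs0 !big_seq1 weightS.
rewrite T_rec //= big_cat big_map /=.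
have -> : k.+1%:Z - 1 = k%:Z by rewrite intS addrAC subrr add0r.
congr (_ + _).
  have [lt_nk | lt_kn] := ltnP n k.+1.
    by rewrite incr_seqs_nil // big_nil T_out ?mulr0 //; right; rewrite ltz_nat.
  rewrite IH // mulr_sumr; apply: eq_big_seq => L.
  by rewrite mem_incr_seqs => /andP[L_in /eqP <-]; rewrite weightS.
rewrite IH // mulr_sumr; apply: eq_big_seq => L.
by rewrite mem_incr_seqs => /andP[_ /eqP <-]; rewrite weight_rcons.
Qed.

End Weight.

Section IncrFuns.

Variables k n : nat.
Implicit Type s : {ffun 'I_k -> 'I_n}.

(* [compl_seq s] is convertible to [complement n (sig1_seq s)]. *)
Definition sig1_seq s : seq nat := [seq sig1 s i | i : 'I_k].

Lemma size_sig1_seq s : size (sig1_seq s) = k.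
Proof. by rewrite size_map size_enum_ord. Qed.

Lemma nth_sig1_seq s (i : 'I_k) : nth 0%N (sig1_seq s) i = sig1 s i.
Proof. by rewrite (nth_map i) ?size_enum_ord // nth_ord_enum. Qed.

Lemma sig1_seq_inj : injective sig1_seq.
Proof.
move=> s t st; apply/ffunP => i; apply/val_inj.
by have := congr1 (nth 0%N ^~ i) st; rewrite !nth_sig1_seq => -[].
Qed.

Lemma all_sig1_seq s : all (fun x => 0 < x <= n)%N (sig1_seq s).
Proof. by apply/allP => _ /mapP[i _ ->]; apply: ltn_ord. Qed.

Lemma mem_incr_funs s : (s \in incr_funs k n) = sorted ltn (sig1_seq s).
Proof.
rewrite inE (sorted_pairwise ltn_trans); apply/forallP/(pairwiseP 0%N).
  move=> lt_s i j; rewrite !inE size_sig1_seq => lt_ik lt_jk lt_ij.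
  rewrite -[i]/(Ordinal lt_ik : nat) -[j]/(Ordinal lt_jk : nat) !nth_sig1_seq.
  by move/forallP: (lt_s (Ordinal lt_ik)) => /(_ (Ordinal lt_jk)) /implyP; apply.
move=> lt_s i; apply/forallP => j; apply/implyP => lt_ij.
by have := lt_s i j; rewrite !inE size_sig1_seq !ltn_ord !nth_sig1_seq; apply.
Qed.

Lemma sig1_seq_surj L :
  size L = k -> all (fun x => 0 < x <= n)%N L -> exists s, sig1_seq s = L.
Proof.
move=> sizeL L_in.
have nth_in (i : 'I_k) : (0 < nth 0 L i <= n)%N.
  by apply: (allP L_in); rewrite mem_nth ?sizeL.
have lt_n (i : 'I_k) : ((nth 0 L i).-1 < n)%N by have := nth_in i; lia.
exists [ffun i => Ordinal (lt_n i)].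
apply: (@eq_from_nth _ 0%N) => [|i]; rewrite size_sig1_seq // => lt_ik.
rewrite -[i]/(Ordinal lt_ik : nat) nth_sig1_seq /sig1 ffunE /= prednK //.
by case/andP: (nth_in (Ordinal lt_ik)).
Qed.

Lemma big_incr_funs (A : Type) (idx : A) (op : SemiGroup.com_law A) (F : seq nat -> A) :
  \big[op/idx]_(s in incr_funs k n) F (sig1_seq s) = \big[op/idx]_(L <- incr_seqs n k) F L.
Proof.
rewrite -big_enum -(big_map sig1_seq xpredT); apply/perm_big/uniq_perm.
- by rewrite map_inj_uniq ?enum_uniq //; apply: sig1_seq_inj.
- exact: incr_seqs_uniq.
move=> L; rewrite mem_incr_seqs; apply/mapP/andP => [[s] | [L_in /eqP sizeL]].
  rewrite mem_enum mem_incr_funs => s_sorted ->.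
  by rewrite /incr_seq_in s_sorted all_sig1_seq size_sig1_seq.
case/andP: L_in => L_sorted L_in; have [s sL] := sig1_seq_surj sizeL L_in.
by exists s; rewrite // mem_enum mem_incr_funs sL.
Qed.

End IncrFuns.

Theorem mainTheorem1 (R : realType) (a b : nat -> nat -> R) (T : nat -> int -> R)
  (HT00 : T 0%N 0%Z = 1)
  (HTout : forall (n : nat) (k : int), (k < 0)%R \/ (n%:Z < k)%R -> T n k = 0)
  (HTrec : forall (n k : nat), (1 <= n)%N -> (k <= n)%N ->
     T n k%:Z = a n k * T n.-1 k%:Z + b n k * T n.-1 (k%:Z - 1)) :
  forall (n k : nat), (k <= n)%N ->
    T n k%:Z =
      \sum_(s in incr_funs k n)
        (\prod_(i < n - k) a (nth 0%N (compl_seq s) i) (nth 0%N (compl_seq s) i - i.+1)%N)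
        * (\prod_(i < k) b (sig1 s i) i.+1).
Proof.
move=> n k le_kn; rewrite (T_incr_seqs HT00 HTout HTrec le_kn) -big_incr_funs.
apply: eq_bigr => s _; rewrite /weight size_sig1_seq; congr (_ * _).
by apply: eq_bigr => i _; rewrite nth_sig1_seq.
Qed.
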